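(* Let $k$ be a symmetric positive semidefinite kernel on $\mathbb{R}^d$, $\sigma_n^2>0$, and let $\mathbb{D}_N^x=\{\bm{x}^{(i)}\}_{i=1}^N$ with $N\ge1$ be an input training data set with GP posterior variance $\sigma_N^2(\cdot)$. Then for every $\bm{x}\in\mathbb{R}^d$, $$\sigma_N^2(\bm{x})\le k(\bm{x},\bm{x})-\frac{N\min_{\bm{x}'\in\mathbb{D}_N^x}k(\bm{x}',\bm{x})^2}{N\max_{\bm{x}',\bm{x}''\in\mathbb{D}_N^x}k(\bm{x}',\bm{x}'')+\sigma_n^2}.$$
   Context: Gaussian process posterior variance: with $K_{N,ij}=k(\bm{x}^{(i)},\bm{x}^{(j)})$, $k_{N,i}(\bm{x})=k(\bm{x},\bm{x}^{(i)})$, $\bm{A}_N=\bm{K}_N+\sigma_n^2\bm{I}_N$, $\sigma_N^2(\bm{x})=k(\bm{x},\bm{x})-\bm{k}_N(\bm{x})^T\bm{A}_N^{-1}\bm{k}_N(\bm{x})$. The max and min range over training inputs (pairs may coincide). *)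

(* kernels over an arbitrary real field R (covers R = reals). *)
From HB Require Import structures.
From mathcomp Require Import all_boot all_order all_algebra.
Set Implicit Arguments. Unset Strict Implicit. Unset Printing Implicit Defensive.
Import Order.TTheory GRing.Theory Num.Theory.
Local Open Scope ring_scope.

Definition symmetric_kernel (R : realFieldType) (d : nat)
  (k : 'rV[R]_d -> 'rV[R]_d -> R) : Prop :=
  forall x y, k x y = k y x.

Definition psd_kernel (R : realFieldType) (d : nat)
  (k : 'rV[R]_d -> 'rV[R]_d -> R) : Prop :=
  forall (n : nat) (X : 'I_n -> 'rV[R]_d) (c : 'I_n -> R),
    0 <= \sum_(i < n) \sum_(j < n) c i * c j * k (X i) (X j).

Definition gram (R : realFieldType) (d N : nat)
  (k : 'rV[R]_d -> 'rV[R]_d -> R) (X : 'I_N -> 'rV[R]_d) : 'M[R]_N :=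
  \matrix_(i, j) k (X i) (X j).

Definition kvec (R : realFieldType) (d N : nat)
  (k : 'rV[R]_d -> 'rV[R]_d -> R) (X : 'I_N -> 'rV[R]_d) (x : 'rV[R]_d)
  : 'cV[R]_N :=
  \col_i k x (X i).

Definition Amat (R : realFieldType) (d N : nat)
  (k : 'rV[R]_d -> 'rV[R]_d -> R) (X : 'I_N -> 'rV[R]_d) (sn2 : R) : 'M[R]_N :=
  gram k X + sn2%:M.

Definition post_var (R : realFieldType) (d N : nat)
  (k : 'rV[R]_d -> 'rV[R]_d -> R) (X : 'I_N -> 'rV[R]_d) (sn2 : R)
  (x : 'rV[R]_d) : R :=
  k x x - ((kvec k X x)^T *m invmx (Amat k X sn2) *m kvec k X x) 0 0.

(* max over pairs of training inputs of k(x',x''); i0 is any index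
   (used only as the seed of the fold, the value does not depend on it) *)
Definition max_gram (R : realFieldType) (d N : nat)
  (k : 'rV[R]_d -> 'rV[R]_d -> R) (X : 'I_N -> 'rV[R]_d) (i0 : 'I_N) : R :=
  \big[Num.max/k (X i0) (X i0)]_(i < N) \big[Num.max/k (X i0) (X i0)]_(j < N)
     k (X i) (X j).

Definition min_ksq (R : realFieldType) (d N : nat)
  (k : 'rV[R]_d -> 'rV[R]_d -> R) (X : 'I_N -> 'rV[R]_d) (i0 : 'I_N)
  (x : 'rV[R]_d) : R :=
  \big[Num.min/k (X i0) x ^+ 2]_(i < N) k (X i) x ^+ 2.

From HB Require Import structures.
From mathcomp Require Import all_boot all_order all_algebra.
From mathcomp Require Import ring lra.
Import Order.TTheory GRing.Theory Num.Theory.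
Local Open Scope ring_scope.
Set Implicit Arguments. Unset Strict Implicit.

(* Write A = K_N + sigma_n^2 I, u = k_N(x), c = N M + sigma_n^2
   with M the largest Gram entry.  The theorem says u^T A^-1 u >= N m / c,
   where m is the smallest k(x',x)^2; it follows from three facts:
   - a general linear-algebra inequality: for a symmetric, invertible,
     positive semidefinite A whose quadratic form is bounded by c |u|^2 at u,
     |u|^2 <= c u^T A^-1 u  (expand 0 <= w^T A w for w = u - c A^-1 u);
   - the quadratic form of A is bounded by c |u|^2, because positive
     semidefiniteness of 2x2 Gram matrices gives 2 a b k(y,z) <= M (a^2 + b^2);
   - |u|^2 = sum_i k(x_i,x)^2 >= N m. *)

Definition qform (R : pzRingType) (n : nat) (A : 'M[R]_n) (u : 'cV[R]_n) : R :=
  (u^T *m A *m u) 0 0.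

Lemma qform1 (R : comPzRingType) (n : nat) (u : 'cV[R]_n) :
  (u^T *m u) 0 0 = \sum_i u i 0 ^+ 2.
Proof. by rewrite mxE; apply: eq_bigr => i _; rewrite mxE expr2. Qed.

Lemma qform_inv_lower (R : realFieldType) (n : nat) (A : 'M[R]_n)
    (u : 'cV[R]_n) (c : R) :
  A^T = A -> A \in unitmx -> (forall w, 0 <= qform A w) -> 0 < c ->
  qform A u <= c * \sum_i u i 0 ^+ 2 ->
  \sum_i u i 0 ^+ 2 <= c * qform (invmx A) u.
Proof.
move=> AT Aunit Apsd c_gt0 hAu.
set v := invmx A *m u.
have Av : A *m v = u by rewrite /v mulKVmx.
have vA : v^T *m A = u^T by rewrite -{1}AT -trmx_mul Av.
have invE : qform (invmx A) u = (u^T *m v) 0 0 by rewrite /qform /v mulmxA.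
(* w^T A w = u^T A u - 2 c |u|^2 + c^2 u^T A^-1 u for w = u - c A^-1 u *)
have expand : qform A (u - c *: v)
    = qform A u - 2 * c * (u^T *m u) 0 0 + c ^+ 2 * (u^T *m v) 0 0.
  rewrite /qform.
  have -> : (u - c *: v)^T = u^T - c *: v^T by apply/matrixP => i j; rewrite !mxE.
  rewrite !mulmxBl !mulmxBr -!scalemxAl.
  rewrite -!scalemxAr vA -(mulmxA u^T A v) Av scalerA !mxE; ring.
have := Apsd (u - c *: v); rewrite expand qform1 -invE => hw.
have scaled : c * \sum_i u i 0 ^+ 2 <= c ^+ 2 * qform (invmx A) u by lra.
by rewrite -(ler_pM2l c_gt0) mulrA -expr2.
Qed.

Section KernelEstimates.
Variables (R : realFieldType) (d N : nat) (k : 'rV[R]_d -> 'rV[R]_d -> R).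
Hypotheses (hsym : symmetric_kernel k) (hpsd : psd_kernel k).

(* Positive semidefiniteness of the 2x2 Gram matrix of y and z. *)
Lemma kernel_cross_le (y z : 'rV[R]_d) (a b : R) :
  2 * a * b * k y z <= a ^+ 2 * k y y + b ^+ 2 * k z z.
Proof.
have := hpsd (fun i : 'I_2 => if i == ord0 then y else z)
   (fun i : 'I_2 => if i == ord0 then a else - b).
rewrite !big_ord_recr /= !big_ord0 /= !add0r (hsym z y) => h.
rewrite -subr_ge0; apply: le_trans h _; rewrite le_eqVlt; apply/orP; left.
by apply/eqP; ring.
Qed.

Lemma kernel_diag_ge0 (y : 'rV[R]_d) : 0 <= k y y.
Proof.
have := kernel_cross_le y y 1 0.
by rewrite expr1n expr0n /= !mulr0 !mul0r addr0 mul1r.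
Qed.

Variables (X : 'I_N -> 'rV[R]_d) (sn2 : R).

Lemma qform_Amat (u : 'cV[R]_N) :
  qform (Amat k X sn2) u =
  \sum_i \sum_j u i 0 * u j 0 * k (X i) (X j) + sn2 * \sum_i u i 0 ^+ 2.
Proof.
rewrite /qform /Amat mulmxDr mulmxDl mxE; congr (_ + _).
  rewrite mxE; under eq_bigr => j _ do rewrite !mxE mulr_suml.
  rewrite exchange_big /=; apply: eq_bigr => i _; apply: eq_bigr => j _.
  by rewrite !mxE mulrAC.
by rewrite mul_mx_scalar -scalemxAl mxE qform1.
Qed.

Lemma Amat_sym : (Amat k X sn2)^T = Amat k X sn2.
Proof.
rewrite /Amat raddfD /= tr_scalar_mx; congr (_ + _).
by apply/matrixP => i j; rewrite !mxE hsym.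
Qed.

Lemma Amat_psd : 0 <= sn2 -> forall u, 0 <= qform (Amat k X sn2) u.
Proof.
move=> sn2_ge0 u; rewrite qform_Amat; apply: addr_ge0; first exact: hpsd.
by rewrite mulr_ge0 // sumr_ge0 // => i _; exact: sqr_ge0.
Qed.

(* With a positive noise variance, A_N is positive definite, hence invertible. *)
Lemma Amat_unit : 0 < sn2 -> Amat k X sn2 \in unitmx.
Proof.
move=> sn2_gt0; set A := Amat k X sn2.
rewrite -row_free_unit -kermx_eq0; apply/eqP/row_matrixP => i; rewrite row0.
set u := row i (kermx A).
have uA : u *m A = 0 by rewrite /u -row_mul mulmx_ker row0.
have : qform A u^T = 0 by rewrite /qform trmxK uA mul0mx mxE.
rewrite qform_Amat => hq.
have hsum : \sum_j u^T j 0 ^+ 2 = 0.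
  apply/eqP; rewrite eq_le sumr_ge0 ?andbT => [|j _]; last exact: sqr_ge0.
  rewrite -(pmulr_rle0 _ sn2_gt0) -(lerD2l (\sum_i \sum_j
    u^T i 0 * u^T j 0 * k (X i) (X j))) hq addr0.
  exact: (hpsd X (fun i => u^T i 0)).
apply/rowP => j.
have /eqP := psumr_eq0P (fun j _ => sqr_ge0 (u^T j 0)) hsum (i := j) isT.
by rewrite sqrf_eq0 mxE => /eqP ->; rewrite mxE.
Qed.

Variable i0 : 'I_N.

Lemma gram_le_max (i j : 'I_N) : k (X i) (X j) <= max_gram k X i0.
Proof. exact: le_trans (le_bigmax _ _ j) (le_bigmax _ _ i). Qed.

Lemma gram_qform_le (u : 'cV[R]_N) :
  \sum_i \sum_j u i 0 * u j 0 * k (X i) (X j) <=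
  N%:R * max_gram k X i0 * \sum_i u i 0 ^+ 2.
Proof.
set M := max_gram k X i0; set S := \sum_i u i 0 ^+ 2.
have pair_le (i j : 'I_N) :
    2 * (u i 0 * u j 0 * k (X i) (X j)) <= M * (u i 0 ^+ 2 + u j 0 ^+ 2).
  have := kernel_cross_le (X i) (X j) (u i 0) (u j 0).
  have := ler_wpM2l (sqr_ge0 (u i 0)) (gram_le_max i i).
  have := ler_wpM2l (sqr_ge0 (u j 0)) (gram_le_max j j).
  rewrite /M; lra.
rewrite -(@ler_pM2l _ 2) // mulr_sumr.
under eq_bigr => i _ do rewrite mulr_sumr.
apply: le_trans (ler_sum _ (fun i _ => ler_sum _ (fun j _ => pair_le i j))) _.
under eq_bigr => i _ do rewrite -mulr_sumr big_split /= sumr_const card_ord.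
rewrite -mulr_sumr big_split /= sumr_const card_ord -/S sumrMnl.
by rewrite -/S -mulr_natr; lra.
Qed.

Lemma kvec_sumsq_ge (x : 'rV[R]_d) :
  N%:R * min_ksq k X i0 x <= \sum_i kvec k X x i 0 ^+ 2.
Proof.
have -> : N%:R * min_ksq k X i0 x = \sum_(i < N) min_ksq k X i0 x.
  by rewrite sumr_const card_ord mulr_natl.
apply: ler_sum => i _; rewrite mxE hsym; exact: bigmin_le.
Qed.

End KernelEstimates.

Theorem mainTheorem9 (R : realFieldType) (d N : nat)
  (k : 'rV[R]_d -> 'rV[R]_d -> R) (sn2 : R)
  (hsym : symmetric_kernel k) (hpsd : psd_kernel k) (hsn : 0 < sn2)
  (hN : (0 < N)%N) (X : 'I_N -> 'rV[R]_d) (x : 'rV[R]_d) :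
  let i0 := Ordinal hN in
  post_var k X sn2 x <=
    k x x - (N%:R * min_ksq k X i0 x) / (N%:R * max_gram k X i0 + sn2).
Proof.
cbv zeta; set i0 := Ordinal hN; set c := N%:R * max_gram k X i0 + sn2.
set u := kvec k X x; set S := \sum_i u i 0 ^+ 2.
have c_gt0 : 0 < c.
  rewrite ltr_wpDl // mulr_ge0 ?ler0n //.
  exact: le_trans (kernel_diag_ge0 hsym hpsd (X i0)) (gram_le_max k X i0 i0 i0).
have A_bound : qform (Amat k X sn2) u <= c * S.
  rewrite qform_Amat /c mulrDl lerD2r; exact: gram_qform_le.
have := qform_inv_lower (Amat_sym hsym X sn2) (Amat_unit hpsd X hsn)
  (Amat_psd hpsd X (ltW hsn)) c_gt0 A_bound.
rewrite /post_var lerD2l lerN2 ler_pdivrMr // mulrC -/(qform _ u) => hS.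
exact: le_trans (kvec_sumsq_ge hsym X i0 x) hS.
Qed.
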